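(* Let $M>0$, $\beta^*>0$, and let $g$ be the log-normal density $g(t)=\frac{1}{t\sigma\sqrt{2\pi}}\exp\!\big(-\frac{(\ln t-\mu)^2}{2\sigma^2}\big)$ for $t>0$, $g(t)=0$ for $t\le0$ ($\mu\in\mathbb{R}$, $\sigma>0$). Let $I$ be the unique $C^1$ solution on $[0,\infty)$ of \[ I'(t)=\beta^*(M-I(t))\Big(I(t)-\int_0^t g(t-s)I(s)\,ds\Big),\qquad I(0)=I_0\in[0,M]. \] If $0<I_0<M$, then $I'(t)>0$ for all $t\ge0$; if $I_0=0$ or $I_0=M$, then $I'\equiv 0$. *)

From Stdlib Require Import Reals.
From Coquelicot Require Import Coquelicot.
Open Scope R_scope.

Definition lognormal (mu sigma : R) (t : R) : R :=
  if Rle_dec t 0 then 0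
  else / (t * sigma * sqrt (2 * PI)) * exp (- ((ln t - mu) ^ 2) / (2 * sigma ^ 2)).

Definition C1_on_nonneg (I dI : R -> R) : Prop :=
  (forall t, 0 < t -> is_derive I t (dI t)) /\
  filterlim (fun h => (I h - I 0) / h) (at_right 0) (locally (dI 0)) /\
  (forall t, 0 < t -> continuous dI t) /\
  filterlim dI (at_right 0) (locally (dI 0)).

Definition is_solution (beta M mu sigma I0 : R) (I dI : R -> R) : Prop :=
  C1_on_nonneg I dI /\ I 0 = I0 /\
  forall t, 0 <= t ->
    dI t = beta * (M - I t) * (I t - RInt (fun s => lognormal mu sigma (t - s) * I s) 0 t).

(* If 0 < I0 < M, then I'(0) = beta (M - I0) I0 > 0.  Suppose I' has a first
   nonpositive point ts > 0.  Before ts, I increases, so the delay term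
   J(ts) = \int_0^ts g(ts - s) I(s) ds is < I(ts) (g is positive and has mass
   at most 1); and M - I(ts) > 0, because (M - I(s)) e^{beta M s} is
   nondecreasing while I <= M.  Hence I'(ts) > 0, a contradiction.
   If I0 = 0 (resp. I0 = M), then w = I (resp. I - M) vanishes at 0 and
   satisfies |w'(t)| <= K sup_[0,t] |w| on bounded intervals, which forces
   w = 0 by the mean value theorem on short steps; then I' = 0.
   For the log-normal density the mass bound is the Gaussian integral
   \int e^{-w^2} <= sqrt PI, obtained from the classical identity
   (\int_0^x e^{-t^2} dt)^2 + \int_0^1 e^{-x^2 (1+t^2)} / (1+t^2) dt = PI / 4. *)

From Stdlib Require Import Reals Lra Psatz.
From Coquelicot Require Import Coquelicot.
From Corelib Require Import ssreflect.
Open Scope R_scope.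

Lemma ball_Rabs (x e y : R) : ball x e y <-> Rabs (y - x) < e.
Proof. by []. Qed.

Lemma Rabs_triang_minus (a b : R) : Rabs (a - b) <= Rabs a + Rabs b.
Proof. by have := Rabs_triang a (- b); rewrite Rabs_Ropp. Qed.

Lemma MVT_open (f df : R -> R) (a b : R) : a < b ->
  (forall x, a < x < b -> is_derive f x (df x)) ->
  (forall x, a <= x <= b -> continuity_pt f x) ->
  exists c, a < c < b /\ f b - f a = df c * (b - a).
Proof.
  move=> Hab Hd Hc.
  have [c [Hc' E]] := MVT f id a b
    (fun c P => exist _ (df c) (proj1 (is_derive_Reals _ _ _) (Hd c P)))
    (fun c _ => derivable_pt_id c) Hab Hc
    (fun c _ => derivable_continuous_pt _ _ (derivable_pt_id c)).
  exists c; split => //; move: E; rewrite derive_pt_id /id /=; lra.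
Qed.

Lemma increasing_of_is_derive_pos (f df : R -> R) (a b : R) : a < b ->
  (forall x, a < x < b -> is_derive f x (df x)) ->
  (forall x, a <= x <= b -> continuity_pt f x) ->
  (forall x, a < x < b -> 0 < df x) -> f a < f b.
Proof.
  move=> Hab Hd Hc Hpos; have [c [Hc' E]] := MVT_open f df a b Hab Hd Hc.
  have := Hpos c Hc'; nra.
Qed.

Lemma nondecreasing_of_is_derive_ge0 (f df : R -> R) (a b : R) : a <= b ->
  (forall x, a < x < b -> is_derive f x (df x)) ->
  (forall x, a <= x <= b -> continuity_pt f x) ->
  (forall x, a < x < b -> 0 <= df x) -> f a <= f b.
Proof.
  move=> Hab Hd Hc Hpos; case: (Rle_lt_or_eq_dec a b Hab) => [Hlt|<-]; last lra.
  have [c [Hc' E]] := MVT_open f df a b Hlt Hd Hc.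
  have := Hpos c Hc'; nra.
Qed.

Lemma continuous_of_lipschitz_at (f : R -> R) (x K : R) (d : posreal) :
  (forall y, Rabs (y - x) < d -> Rabs (f y - f x) <= K * Rabs (y - x)) ->
  continuous f x.
Proof.
  move=> Hf; apply/filterlim_locally => eps.
  have HK : 0 < Rabs K + 1 by have := Rabs_pos K; lra.
  have Hdelta : 0 < Rmin d (eps / (Rabs K + 1)).
  { apply: Rmin_glb_lt; [exact: cond_pos|apply: Rdiv_lt_0_compat => //; exact: cond_pos]. }
  exists (mkposreal _ Hdelta) => y /ball_Rabs /= Hy; apply/ball_Rabs.
  have Hyd := Rlt_le_trans _ _ _ Hy (Rmin_l _ _).
  have Hye := Rlt_le_trans _ _ _ Hy (Rmin_r _ _).
  have Hlt : (Rabs K + 1) * Rabs (y - x) < eps.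
  { rewrite Rmult_comm; apply/Rlt_div_r => //. }
  have := Hf y Hyd; have := Rle_abs K; have := Rabs_pos (y - x); nra.
Qed.

Lemma pos_at_right (f : R -> R) (x : R) :
  filterlim f (at_right x) (locally (f x)) -> 0 < f x ->
  exists d : posreal, forall y, x < y < x + d -> 0 < f y.
Proof.
  move=> Hf Hpos.
  have Hnbhd : locally (f x) (fun z => 0 < z).
  { by exists (mkposreal _ Hpos) => z /ball_Rabs /Rabs_def2 /= ?; lra. }
  have [d Hd] := Hf _ Hnbhd; exists d => y Hy; apply: Hd; last lra.
  apply/ball_Rabs; rewrite Rabs_pos_eq; lra.
Qed.

Lemma first_nonpos_point (f : R -> R) (a t : R) :
  (forall x, a <= x -> filterlim f (at_right x) (locally (f x))) ->
  a <= t -> f t <= 0 ->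
  exists ts, a <= ts <= t /\ f ts <= 0 /\ forall s, a <= s < ts -> 0 < f s.
Proof.
  move=> Hf Hat Hft.
  set E := fun x => a <= x <= t /\ forall s, a <= s < x -> 0 < f s.
  have Ea : E a by split => [|s]; lra.
  have Ebound : bound E by exists t => x [Hx _]; lra.
  have [ts [Hub Hlub]] := completeness E Ebound (ex_intro _ a Ea).
  have Hts : a <= ts <= t by split; [exact: Hub|apply: Hlub => x [Hx _]; lra].
  have Hbefore : forall s, a <= s < ts -> 0 < f s.
  { move=> s Hs; case: (Rlt_or_le 0 (f s)) => // Hs'; exfalso.
    have Hs_ub : is_upper_bound E s.
    { move=> x [_ Hx]; case: (Rle_or_lt x s) => // Hxs.
      have := Hx s ltac:(lra); lra. }
    have := Hlub s Hs_ub; lra. }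
  exists ts; split => //; split => //.
  case: (Rle_or_lt (f ts) 0) => // Hpos; exfalso.
  have Htst : ts < t by case: (Req_dec ts t) => [Heq|]; [rewrite Heq in Hpos; lra|lra].
  have [d Hd] := pos_at_right f ts (Hf ts ltac:(lra)) Hpos.
  set x := Rmin (ts + d / 2) t.
  have Hx : ts < x <= ts + d / 2 /\ x <= t.
  { split; [split|]; [apply: Rmin_glb_lt; have := cond_pos d; lra|exact: Rmin_l|exact: Rmin_r]. }
  have Ex : E x.
  { split; first lra.
    move=> s Hs; case: (Rtotal_order s ts) => [Hlt|[->|Hgt]] //.
    - apply: Hbefore; lra.
    - apply: Hd; lra. }
  have := Hub x Ex; lra.
Qed.

Lemma bounded_on_segment (f : R -> R) (T : R) : (forall s, continuous f s) -> 0 <= T ->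
  exists B, forall s, 0 <= s <= T -> Rabs (f s) <= B.
Proof.
  move=> Hf HT.
  have [tm [Hmax _]] := continuity_ab_maj (fun s => Rabs (f s)) 0 T HT
    (fun s _ => continuity_pt_comp f Rabs s
       (proj2 (continuity_pt_filterlim _ _) (Hf s)) (Rcontinuity_abs _)).
  by exists (Rabs (f tm)).
Qed.

Section Vanishing.

Variables (w dw : R -> R) (T K : R).
Hypothesis w_cont : forall s, continuous w s.
Hypothesis w_deriv : forall t, 0 < t -> is_derive w t (dw t).
Hypothesis dw_dominated : forall t m, 0 < t <= T ->
  (forall s, 0 <= s <= t -> Rabs (w s) <= m) -> Rabs (dw t) <= K * m.

(* If [w] vanishes on [[0, a]], the mean value theorem on [[a, t0]], with [t0]
   a maximum point of [|w|] on [[0, b]], gives [max |w| <= max |w| / 2]. *)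
Lemma vanish_step (a b : R) : 0 <= a <= b -> b <= T -> K * (b - a) <= / 2 ->
  (forall s, 0 <= s <= a -> w s = 0) -> forall s, 0 <= s <= b -> w s = 0.
Proof.
  move=> Hab HbT Hsmall Ha.
  have w_cpt : forall s, continuity_pt w s by move=> s; apply/continuity_pt_filterlim/w_cont.
  have [t0 [Hmax Ht0]] := continuity_ab_maj (fun x => Rabs (w x)) 0 b ltac:(lra)
    (fun s _ => continuity_pt_comp w Rabs s (w_cpt s) (Rcontinuity_abs _)).
  have Hm : Rabs (w t0) <= 0.
  { case: (Rle_or_lt t0 a) => [Hle|Hlt]; first by rewrite Ha ?Rabs_R0; lra.
    have [c [Hc E]] := MVT_open w dw a t0 Hlt (fun x Hx => w_deriv x ltac:(lra))
      (fun x _ => w_cpt x).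
    rewrite (Ha a) ?Rminus_0_r in E; last lra.
    have Hdc : Rabs (dw c) <= K * Rabs (w t0).
    { apply: dw_dominated => [|s Hs]; [lra|apply: Hmax; lra]. }
    have Hw_t0 : Rabs (w t0) = Rabs (dw c) * (t0 - a).
    { by rewrite E Rabs_mult (Rabs_pos_eq (t0 - a)) //; lra. }
    have := Rabs_pos (dw c); nra. }
  move=> s Hs; apply: Rabs_eq_0; have /= := Hmax s Hs; have := Rabs_pos (w s); lra.
Qed.

Lemma vanish_on_segment : 0 < T -> w 0 = 0 -> forall s, 0 <= s <= T -> w s = 0.
Proof.
  move=> HT Hw0.
  have HK := Rabs_pos K.
  set delta := / (2 * (Rabs K + 1)).
  have Hdelta : 0 < delta by apply: Rinv_0_lt_compat; lra.
  have HKdelta : K * delta <= / 2.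
  { have -> : / 2 = (Rabs K + 1) * delta by rewrite /delta; field; lra.
    apply: Rmult_le_compat_r; [lra|have := Rle_abs K; lra]. }
  have Hind : forall n, forall s, 0 <= s <= Rmin (INR n * delta) T -> w s = 0.
  { elim=> [|n IH] s Hs.
    - by rewrite Rmult_0_l Rmin_left in Hs; [have -> : s = 0 by lra|lra].
    - move: Hs; rewrite S_INR; have := pos_INR n => Hn Hs.
      apply: (vanish_step (Rmin (INR n * delta) T) _ _ (Rmin_r _ _) _ IH _ Hs).
      + split; [apply: Rmin_glb; nra|apply: Rle_min_compat_r; nra].
      + rewrite /Rmin; case: Rle_dec; case: Rle_dec; nra. }
  have [n Hn] := INR_unbounded (T / delta).
  move=> s Hs; apply: (Hind n); rewrite Rmin_right; first lra.
  have : T / delta * delta = T by field; lra.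
  nra.
Qed.

End Vanishing.

Lemma eq0_of_deriv_dominated (w dw : R -> R) :
  (forall s, continuous w s) -> (forall t, 0 < t -> is_derive w t (dw t)) -> w 0 = 0 ->
  (forall T, 0 < T -> exists K, forall t m, 0 < t <= T ->
     (forall s, 0 <= s <= t -> Rabs (w s) <= m) -> Rabs (dw t) <= K * m) ->
  forall t, 0 <= t -> w t = 0.
Proof.
  move=> Hc Hd Hw0 Hdom t Ht; case: (Req_dec t 0) => [->|Ht0] //.
  have [K HK] := Hdom t ltac:(lra).
  apply: (vanish_on_segment w dw t K) => //; lra.
Qed.

(* A function given on [[0, +oo)] extended by the constant [I 0] to the left,
   so that two-sided continuity makes sense at [0]. *)
Definition extend_left (I : R -> R) (s : R) : R := I (Rmax 0 s).

Lemma extend_left_nonneg (I : R -> R) (s : R) : 0 <= s -> extend_left I s = I s.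
Proof. by move=> Hs; rewrite /extend_left Rmax_right. Qed.

Section C1_on_nonneg.

Variables I dI : R -> R.
Hypothesis I_C1 : C1_on_nonneg I dI.

Lemma extend_left_continuous (s : R) : continuous (extend_left I) s.
Proof.
  case: I_C1 => [Hd [Hquot _]].
  case: (Rtotal_order s 0) => [Hs|[->|Hs]].
  - apply: (continuous_ext_loc _ (fun _ => I 0)); last exact: continuous_const.
    have Hs' : 0 < - s by lra.
    exists (mkposreal _ Hs') => y /ball_Rabs /Rabs_def2 /= Hy.
    rewrite /extend_left Rmax_left //; lra.
  - have Hnbhd : locally (dI 0) (fun q => Rabs q <= Rabs (dI 0) + 1).
    { exists (mkposreal 1 Rlt_0_1) => q /ball_Rabs /= Hq.
      have := Rabs_triang_inv q (dI 0); lra. }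
    have [d Hd'] := Hquot _ Hnbhd.
    apply: (continuous_of_lipschitz_at _ 0 (Rabs (dI 0) + 1) d) => y.
    rewrite Rminus_0_r /extend_left (Rmax_left 0 0) => [Hy|]; last lra.
    case: (Rle_or_lt y 0) => Hy0.
    + rewrite Rmax_left // Rminus_diag Rabs_R0.
      apply: Rmult_le_pos; [have := Rabs_pos (dI 0); lra|exact: Rabs_pos].
    + have Hq : Rabs ((I y - I 0) / y) <= Rabs (dI 0) + 1.
      { by apply: Hd' => //; apply/ball_Rabs; rewrite Rminus_0_r. }
      rewrite Rmax_right; last lra.
      have -> : I y - I 0 = y * ((I y - I 0) / y) by field; lra.
      rewrite Rabs_mult Rmult_comm; apply: Rmult_le_compat_r => //; exact: Rabs_pos.
  - apply: (continuous_ext_loc _ I).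
    + exists (mkposreal s Hs) => y /ball_Rabs /Rabs_def2 /= Hy.
      rewrite extend_left_nonneg //; lra.
    + apply: ex_derive_continuous; exists (dI s); exact: Hd.
Qed.

Lemma continuity_pt_extend_left (s : R) : continuity_pt (extend_left I) s.
Proof. apply/continuity_pt_filterlim; exact: extend_left_continuous. Qed.

Lemma is_derive_extend_left (t : R) : 0 < t -> is_derive (extend_left I) t (dI t).
Proof.
  move=> Ht; case: I_C1 => [Hd _]; apply: (is_derive_ext_loc I); last exact: Hd.
  exists (mkposreal t Ht) => y /ball_Rabs /Rabs_def2 /= Hy.
  rewrite extend_left_nonneg //; lra.
Qed.

Lemma deriv_right_continuous (x : R) : 0 <= x -> filterlim dI (at_right x) (locally (dI x)).
Proof.
  move=> Hx; case: I_C1 => [_ [_ [Hc Hc0]]].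
  case: (Rle_lt_or_eq_dec 0 x Hx) => [Hpos|<-] //.
  apply: (filterlim_filter_le_1 _ (filter_le_within _)); exact: Hc.
Qed.

End C1_on_nonneg.

Arguments extend_left_continuous {I dI}.
Arguments continuity_pt_extend_left {I dI}.
Arguments is_derive_extend_left {I dI}.
Arguments deriv_right_continuous {I dI}.

(** * The Gaussian integral *)

Definition gauss (t : R) : R := exp (- (t * t)).

Lemma gauss_continuous (t : R) : continuous gauss t.
Proof. apply: ex_derive_continuous; rewrite /gauss; auto_derive; auto. Qed.

Lemma ex_RInt_gauss (a b : R) : ex_RInt gauss a b.
Proof. apply: ex_RInt_continuous => t _; exact: gauss_continuous. Qed.

Lemma is_derive_RInt_gauss (x : R) : is_derive (RInt gauss 0) x (gauss x).
Proof.
  apply: is_derive_RInt; last exact: gauss_continuous.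
  apply: filter_forall => y; apply: RInt_correct; exact: ex_RInt_gauss.
Qed.

Definition gauss_aux_integrand (x t : R) : R := exp (- (x * x) * (1 + t * t)) / (1 + t * t).

Definition gauss_aux (x : R) : R := RInt (gauss_aux_integrand x) 0 1.

Lemma one_plus_sqr_pos (t : R) : 0 < 1 + t * t.
Proof. nra. Qed.

Lemma gauss_aux_integrand_continuous (x t : R) : continuous (gauss_aux_integrand x) t.
Proof.
  apply: ex_derive_continuous; rewrite /gauss_aux_integrand; auto_derive.
  have := one_plus_sqr_pos t; lra.
Qed.

Lemma Derive_gauss_aux_integrand (x t : R) :
  Derive (fun z => gauss_aux_integrand z t) x = -2 * x * exp (- (x * x) * (1 + t * t)).
Proof.
  have := one_plus_sqr_pos t => Ht.
  apply: is_derive_unique; rewrite /gauss_aux_integrand; auto_derive; first by lra.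
  field; lra.
Qed.

Lemma is_derive_gauss_aux (x : R) : is_derive gauss_aux x (-2 * gauss x * RInt gauss 0 x).
Proof.
  have <- : RInt (fun t => Derive (fun u => gauss_aux_integrand u t) x) 0 1
      = -2 * gauss x * RInt gauss 0 x.
  { rewrite (RInt_ext _ (fun t => scal (-2 * gauss x) (scal x (gauss (x * t + 0))))); last first.
    { move=> t _; rewrite Derive_gauss_aux_integrand /gauss /scal /= /mult /=.
      have -> : - (x * x) * (1 + t * t) = - ((x * t + 0) * (x * t + 0)) + - (x * x) by ring.
      rewrite exp_plus; ring. }
    rewrite RInt_scal; last first.
    { apply: ex_RInt_continuous => t _; apply: continuous_scal_r.
      apply: (continuous_comp (fun t => x * t + 0) gauss); last exact: gauss_continuous.
      apply: ex_derive_continuous; auto_derive; auto. }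
    rewrite RInt_comp_lin; last exact: ex_RInt_gauss.
    by rewrite Rmult_0_r Rmult_1_r !Rplus_0_r /scal /= /mult /=. }
  apply: is_derive_RInt_param.
  - apply: filter_forall => y t _; rewrite /gauss_aux_integrand; auto_derive.
    have := one_plus_sqr_pos t; lra.
  - move=> t _; apply: continuity_2d_pt_ext.
    { move=> u v; symmetry; exact: Derive_gauss_aux_integrand. }
    repeat first
      [ apply: continuity_2d_pt_mult | apply: continuity_2d_pt_plus
      | apply: continuity_2d_pt_opp | apply: continuity_2d_pt_const
      | apply: continuity_2d_pt_id1 | apply: continuity_2d_pt_id2
      | apply: continuity_1d_2d_pt_comp; first exact: derivable_continuous_pt (derivable_pt_exp _) ].
  - apply: filter_forall => y; apply: ex_RInt_continuous => t _.
    exact: gauss_aux_integrand_continuous.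
Qed.

Lemma gauss_identity (x : R) : (RInt gauss 0 x) ^ 2 + gauss_aux x = PI / 4.
Proof.
  set h := fun x => (RInt gauss 0 x) ^ 2 + gauss_aux x.
  have Hh : forall y, is_derive h y 0.
  { move=> y.
    have -> : 0 = gauss y * (2 * RInt gauss 0 y) + (-2 * gauss y * RInt gauss 0 y) by ring.
    apply: (is_derive_plus (fun y => RInt gauss 0 y ^ 2)); last exact: is_derive_gauss_aux.
    apply: (is_derive_comp (fun z => z ^ 2) (RInt gauss 0)); last exact: is_derive_RInt_gauss.
    auto_derive; auto; ring. }
  have Hh0 : h 0 = PI / 4.
  { rewrite /h /gauss_aux RInt_point (RInt_ext _ (fun t => / (1 + t²))); last first.
    { by move=> t _; rewrite /gauss_aux_integrand /Rsqr Rmult_0_l Ropp_0 Rmult_0_l exp_0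
        /Rdiv Rmult_1_l. }
    rewrite (is_RInt_unique _ 0 1 (minus (atan 1) (atan 0))).
    - rewrite atan_1 atan_0 /zero /minus /plus /opp /=; ring.
    - apply: (is_RInt_derive atan) => [t _|t _]; first exact: is_derive_atan.
      apply: ex_derive_continuous; auto_derive; rewrite /Rsqr; have := one_plus_sqr_pos t; lra. }
  have [c [_ Hc]] := MVT_gen h 0 x (fun _ => 0) (fun y _ => Hh y)
    (fun y _ => proj2 (continuity_pt_filterlim _ _)
       (ex_derive_continuous h y (ex_intro _ 0 (Hh y)))).
  rewrite -/(h x); lra.
Qed.

Lemma gauss_aux_ge0 (x : R) : 0 <= gauss_aux x.
Proof.
  apply: RInt_ge_0; first lra.
  - apply: ex_RInt_continuous => t _; exact: gauss_aux_integrand_continuous.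
  - move=> t _; apply/Rlt_le/Rdiv_lt_0_compat; [exact: exp_pos|exact: one_plus_sqr_pos].
Qed.

Lemma abs_RInt_gauss_le (x : R) : Rabs (RInt gauss 0 x) <= sqrt PI / 2.
Proof.
  have := gauss_identity x; have := gauss_aux_ge0 x; have := sqrt_pos PI.
  have := PI_RGT_0 => ? ? ? ?.
  apply: Rsqr_incr_0; [|exact: Rabs_pos|lra].
  rewrite -Rsqr_abs /Rsqr.
  have -> : sqrt PI / 2 * (sqrt PI / 2) = sqrt PI * sqrt PI / 4 by field.
  rewrite sqrt_sqrt /=; lra.
Qed.

Lemma RInt_gauss_le (a b : R) : RInt gauss a b <= sqrt PI.
Proof.
  have := RInt_Chasles gauss 0 a b (ex_RInt_gauss _ _) (ex_RInt_gauss _ _).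
  rewrite /plus /= => Hsplit.
  have := Rle_abs (RInt gauss 0 b); have := Rle_abs (- RInt gauss 0 a).
  rewrite Rabs_Ropp; have := abs_RInt_gauss_le a; have := abs_RInt_gauss_le b; lra.
Qed.

(** * The log-normal density *)

Section Lognormal.

Variables mu sigma : R.
Hypothesis hsigma : 0 < sigma.

Lemma sqrt_2PI_pos : 0 < sqrt (2 * PI).
Proof. apply: sqrt_lt_R0; have := PI_RGT_0; lra. Qed.

Lemma lognormal_nonpos (t : R) : t <= 0 -> lognormal mu sigma t = 0.
Proof. rewrite /lognormal; case: Rle_dec => //; lra. Qed.

Lemma lognormal_pos_eq (t : R) : 0 < t ->
  lognormal mu sigma t
  = / (t * sigma * sqrt (2 * PI)) * exp (- ((ln t - mu) ^ 2) / (2 * sigma ^ 2)).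
Proof. rewrite /lognormal; case: Rle_dec => //; lra. Qed.

Lemma lognormal_pos (t : R) : 0 < t -> 0 < lognormal mu sigma t.
Proof.
  move=> Ht; rewrite lognormal_pos_eq //; have := sqrt_2PI_pos => ?.
  apply: Rmult_lt_0_compat; last exact: exp_pos.
  apply: Rinv_0_lt_compat; apply: Rmult_lt_0_compat => //; nra.
Qed.

Lemma lognormal_ge0 (t : R) : 0 <= lognormal mu sigma t.
Proof.
  case: (Rle_or_lt t 0) => Ht; first by rewrite lognormal_nonpos //; lra.
  exact/Rlt_le/lognormal_pos.
Qed.

Definition lognormal_slope : R := exp (2 * sigma ^ 2 - 2 * mu) / (sigma * sqrt (2 * PI)).

Lemma lognormal_slope_pos : 0 < lognormal_slope.
Proof.
  have := sqrt_2PI_pos => ?; apply: Rdiv_lt_0_compat; [exact: exp_pos|nra].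
Qed.

(* From [(ln t - mu + 2 sigma^2)^2 >= 0]: the Gaussian factor is at most
   [exp (2 sigma^2 - 2 mu) * t^2], which beats the [1/t] singularity. *)
Lemma lognormal_le_linear (t : R) : lognormal mu sigma t <= lognormal_slope * Rabs t.
Proof.
  have := sqrt_2PI_pos => H2PI.
  case: (Rle_or_lt t 0) => Ht.
  { rewrite lognormal_nonpos //; have := lognormal_slope_pos; have := Rabs_pos t; nra. }
  set u := ln t - mu.
  have Hexponent : - (u ^ 2) / (2 * sigma ^ 2) <= (2 * sigma ^ 2 - 2 * mu) + (ln t + ln t).
  { have -> : - (u ^ 2) / (2 * sigma ^ 2)
        = 2 * sigma ^ 2 + 2 * u - (u + 2 * sigma ^ 2) ^ 2 / (2 * sigma ^ 2) by field; lra.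
    have : 0 <= (u + 2 * sigma ^ 2) ^ 2 / (2 * sigma ^ 2).
    { apply: Rdiv_le_0_compat; [exact: pow2_ge_0|nra]. }
    rewrite /u; lra. }
  have Hgauss : exp (- (u ^ 2) / (2 * sigma ^ 2)) <= exp (2 * sigma ^ 2 - 2 * mu) * (t * t).
  { rewrite -{1 2}(exp_ln t) // -!exp_plus.
    case: (Rle_lt_or_eq_dec _ _ Hexponent) => [/exp_increasing|->]; lra. }
  rewrite lognormal_pos_eq // Rabs_pos_eq; last lra.
  have Hinv : 0 < / (t * sigma * sqrt (2 * PI)).
  { apply: Rinv_0_lt_compat; apply: Rmult_lt_0_compat => //; nra. }
  apply: Rle_trans (Rmult_le_compat_l _ _ _ (Rlt_le _ _ Hinv) Hgauss) _.
  rewrite /lognormal_slope; apply: Req_le; field; lra.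
Qed.

Lemma lognormal_continuous (t : R) : continuous (lognormal mu sigma) t.
Proof.
  have := sqrt_2PI_pos => H2PI.
  case: (Rtotal_order t 0) => [Ht|[->|Ht]].
  - apply: (continuous_ext_loc _ (fun _ => 0)); last exact: continuous_const.
    have Ht' : 0 < - t by lra.
    exists (mkposreal _ Ht') => y /ball_Rabs /Rabs_def2 /= Hy.
    rewrite lognormal_nonpos //; lra.
  - apply: (continuous_of_lipschitz_at _ 0 lognormal_slope (mkposreal 1 Rlt_0_1)) => y _.
    rewrite (lognormal_nonpos 0) ?Rminus_0_r; last lra.
    rewrite Rabs_pos_eq; [exact: lognormal_le_linear|exact: lognormal_ge0].
  - apply: (continuous_ext_loc _
      (fun t => / (t * sigma * sqrt (2 * PI)) * exp (- ((ln t - mu) ^ 2) / (2 * sigma ^ 2)))).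
    + exists (mkposreal t Ht) => y /ball_Rabs /Rabs_def2 /= Hy.
      rewrite lognormal_pos_eq //; lra.
    + apply: ex_derive_continuous; auto_derive; repeat split => //.
      apply: Rgt_not_eq; apply: Rmult_lt_0_compat => //; nra.
Qed.

Lemma ex_RInt_lognormal (a b : R) : ex_RInt (lognormal mu sigma) a b.
Proof. apply: ex_RInt_continuous => t _; exact: lognormal_continuous. Qed.

(* The substitution [s = exp (mu + sigma sqrt 2 w)] turns the log-normal
   density into the standard Gaussian [exp (- w^2) / sqrt PI]. *)
Lemma RInt_lognormal_le1_away (e t : R) : 0 < e <= t -> RInt (lognormal mu sigma) e t <= 1.
Proof.
  move=> Het.
  have Hsqrt2 : 0 < sqrt 2 by apply: sqrt_lt_R0; lra.
  have HsqrtPI : 0 < sqrt PI by apply: sqrt_lt_R0; have := PI_RGT_0; lra.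
  set k := sigma * sqrt 2.
  have Hk : 0 < k by rewrite /k; nra.
  set s := fun w => exp (mu + k * w).
  have Hs : forall x, 0 < x -> s ((ln x - mu) / k) = x.
  { move=> x Hx; rewrite /s -{2}(exp_ln x) //; congr exp; field; lra. }
  rewrite -(Hs e); last lra. rewrite -(Hs t); last lra.
  rewrite -(RInt_comp _ s (fun w => k * s w)); first last.
  - move=> x _; split; first by rewrite /s; auto_derive; auto; ring.
    apply: ex_derive_continuous; rewrite /s; auto_derive; auto.
  - move=> x _; exact: lognormal_continuous.
  rewrite (RInt_ext _ (fun w => / sqrt PI * gauss w)); last first.
  { move=> w _; have Hsw : 0 < s w by exact: exp_pos.
    rewrite /scal /= /mult /= lognormal_pos_eq // /s ln_exp.
    have -> : - ((mu + k * w - mu) ^ 2) / (2 * sigma ^ 2) = - (w * w).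
    { rewrite /k; field_simplify; last lra.
      rewrite /= !Rmult_1_r sqrt_sqrt; [field|]; lra. }
    rewrite sqrt_mult /gauss /k; [|lra|have := PI_RGT_0; lra].
    have := exp_pos (mu + sigma * sqrt 2 * w) => ?; field; repeat split; lra. }
  rewrite (RInt_scal gauss _ _ (/ sqrt PI) (ex_RInt_gauss _ _)) /scal /= /mult /=.
  rewrite -(Rinv_l (sqrt PI)); last lra.
  apply: Rmult_le_compat_l; [exact/Rlt_le/Rinv_0_lt_compat|exact: RInt_gauss_le].
Qed.

(* The mass near the singular point [0] is [O(e^2)] by [lognormal_le_linear]. *)
Lemma RInt_lognormal_le1 (t : R) : 0 <= t -> RInt (lognormal mu sigma) 0 t <= 1.
Proof.
  move=> Ht; case: (Req_dec t 0) => [->|Ht0]; first by rewrite RInt_point /zero /=; lra.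
  case: (Rle_or_lt (RInt (lognormal mu sigma) 0 t) 1) => // Hgt; exfalso.
  set d := RInt (lognormal mu sigma) 0 t - 1.
  set K := lognormal_slope; have := lognormal_slope_pos; rewrite -/K => HK.
  set e := Rmin t (Rmin 1 (d / (2 * K))).
  have He : 0 < e /\ e <= t /\ e <= 1 /\ e <= d / (2 * K).
  { have ? : 0 < d / (2 * K) by apply: Rdiv_lt_0_compat; rewrite /d; lra.
    have := Rmin_l t (Rmin 1 (d / (2 * K))); have := Rmin_r t (Rmin 1 (d / (2 * K))).
    have := Rmin_l 1 (d / (2 * K)); have := Rmin_r 1 (d / (2 * K)).
    have : 0 < e by repeat apply: Rmin_glb_lt; lra.
    rewrite /e; lra. }
  have Hnear : Rabs (RInt (lognormal mu sigma) 0 e) <= (e - 0) * (K * e).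
  { apply: abs_RInt_le_const; [lra|exact: ex_RInt_lognormal|] => s Hs.
    rewrite Rabs_pos_eq; last exact: lognormal_ge0.
    apply: Rle_trans (lognormal_le_linear s) _; rewrite -/K Rabs_pos_eq; nra. }
  have Hsmall : K * e * e <= d / 2.
  { have -> : d / 2 = K * (d / (2 * K)) by field; lra.
    case: He => [? [? [? ?]]]; have : e * e <= e by nra. nra. }
  have := RInt_Chasles (lognormal mu sigma) 0 e t (ex_RInt_lognormal _ _) (ex_RInt_lognormal _ _).
  have := RInt_lognormal_le1_away e t ltac:(lra). have := Rle_abs (RInt (lognormal mu sigma) 0 e).
  rewrite /plus /= /d in Hsmall *; lra.
Qed.

End Lognormal.

(** * Convolution with a sub-probability kernel *)

Section Kernel.

Variable g : R -> R.
Hypothesis g_cont : forall t, continuous g t.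
Hypothesis g_ge0 : forall t, 0 <= g t.

Definition conv (v : R -> R) (t : R) : R := RInt (fun s => g (t - s) * v s) 0 t.

Lemma reflect_continuous (t s : R) : continuous (fun s => g (t - s)) s.
Proof.
  apply: (continuous_comp (fun s => t - s) g); last exact: g_cont.
  apply: ex_derive_continuous; auto_derive; auto.
Qed.

Lemma ex_RInt_reflect (t a b : R) : ex_RInt (fun s => g (t - s)) a b.
Proof. apply: ex_RInt_continuous => s _; exact: reflect_continuous. Qed.

Lemma ex_RInt_conv_integrand (v : R -> R) (t a b : R) : (forall s, continuous v s) ->
  ex_RInt (fun s => g (t - s) * v s) a b.
Proof.
  move=> Hv; apply: ex_RInt_continuous => s _.
  apply: (continuous_mult (fun s => g (t - s)) v); [exact: reflect_continuous|exact: Hv].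
Qed.

Lemma RInt_reflect (t : R) : RInt (fun s => g (t - s)) 0 t = RInt g 0 t.
Proof.
  have := RInt_comp_lin g (-1) t t 0.
  have -> : -1 * t + t = 0 by ring.
  have -> : -1 * 0 + t = t by ring.
  move=> <-; last by apply: ex_RInt_continuous => s _; exact: g_cont.
  rewrite (RInt_ext (fun y => scal (-1) (g (-1 * y + t))) (fun s => scal (-1) (g (t - s))));
    last by move=> s _; congr (scal _ (g _)); ring.
  rewrite (RInt_scal (fun s => g (t - s)) t 0 (-1) (ex_RInt_reflect _ _ _)).
  rewrite -(opp_RInt_swap (fun s => g (t - s)) t 0 (ex_RInt_reflect _ _ _)).
  rewrite /scal /opp /= /mult /=; ring.
Qed.

Hypothesis g_mass_le1 : forall t, 0 <= t -> RInt g 0 t <= 1.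

Lemma RInt_reflect_bounds (t : R) : 0 <= t -> 0 <= RInt (fun s => g (t - s)) 0 t <= 1.
Proof.
  move=> Ht; rewrite RInt_reflect; split; last exact: g_mass_le1.
  apply: RInt_ge_0 => //; apply: ex_RInt_continuous => s _; exact: g_cont.
Qed.

Lemma conv_ext (u v : R -> R) (t : R) : 0 <= t ->
  (forall s, 0 <= s <= t -> u s = v s) -> conv u t = conv v t.
Proof.
  move=> Ht Huv; apply: RInt_ext => s; rewrite Rmin_left ?Rmax_right // => Hs.
  by rewrite Huv //; lra.
Qed.

Lemma abs_conv_le (v : R -> R) (m t : R) : (forall s, continuous v s) -> 0 <= t ->
  (forall s, 0 <= s <= t -> Rabs (v s) <= m) -> Rabs (conv v t) <= m.
Proof.
  move=> Hv Ht Hm.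
  have Hm0 : 0 <= m by have := Hm 0 ltac:(lra); have := Rabs_pos (v 0); lra.
  have [Hmass0 Hmass1] := RInt_reflect_bounds t Ht.
  have Hcompare : forall c, ex_RInt (fun s => c * g (t - s)) 0 t /\
      RInt (fun s => c * g (t - s)) 0 t = c * RInt (fun s => g (t - s)) 0 t.
  { move=> c; split; first by apply: ex_RInt_scal; exact: ex_RInt_reflect.
    exact: (RInt_scal (fun s => g (t - s))) (ex_RInt_reflect _ _ _). }
  have [Hex_lo Hlo] := Hcompare (- m); have [Hex_hi Hhi] := Hcompare m.
  apply: Rabs_le; split.
  - apply: Rle_trans (_ : RInt (fun s => - m * g (t - s)) 0 t <= _); first by rewrite Hlo; nra.
    apply: RInt_le => //; first exact: ex_RInt_conv_integrand.
    move=> s Hs; have /Rabs_le_between [Hv_lo _] := Hm s ltac:(lra).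
    rewrite (Rmult_comm (g _)); apply: Rmult_le_compat_r => //; exact: g_ge0.
  - apply: Rle_trans (_ : _ <= RInt (fun s => m * g (t - s)) 0 t) _; last by rewrite Hhi; nra.
    apply: RInt_le => //; first exact: ex_RInt_conv_integrand.
    move=> s Hs; have /Rabs_le_between [_ Hv_hi] := Hm s ltac:(lra).
    rewrite (Rmult_comm (g _)); apply: Rmult_le_compat_r => //; exact: g_ge0.
Qed.

Lemma conv_ge0 (v : R -> R) (t : R) : (forall s, continuous v s) -> 0 <= t ->
  (forall s, 0 <= s <= t -> 0 <= v s) -> 0 <= conv v t.
Proof.
  move=> Hv Ht Hpos; rewrite /conv; apply: RInt_ge_0 => //; first exact: ex_RInt_conv_integrand.
  move=> s Hs; apply: Rmult_le_pos; [exact: g_ge0|apply: Hpos; lra].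
Qed.

Hypothesis g_pos : forall t, 0 < t -> 0 < g t.

Lemma conv_lt (v : R -> R) (t : R) : (forall s, continuous v s) -> 0 < t ->
  (forall s, 0 < s < t -> v s < v t) -> 0 <= v t -> conv v t < v t.
Proof.
  move=> Hv Ht Hlt Hvt; rewrite /conv.
  apply: (Rlt_le_trans _ (RInt (fun s => v t * g (t - s)) 0 t)).
  - apply: RInt_lt => // [s _|s _|s Hs].
    + apply: (continuous_mult (fun _ => v t)); [exact: continuous_const|exact: reflect_continuous].
    + apply: (continuous_mult (fun s => g (t - s)) v); [exact: reflect_continuous|exact: Hv].
    + have := g_pos (t - s) ltac:(lra); have := Hlt s Hs; nra.
  - rewrite (RInt_scal (fun s => g (t - s))); last exact: ex_RInt_reflect.
    have := RInt_reflect_bounds t ltac:(lra); rewrite /scal /= /mult /=; nra.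
Qed.

End Kernel.

(** * The delay equation *)

Section Solution.

Variables (g : R -> R) (beta M : R) (I dI : R -> R).
Hypothesis g_cont : forall t, continuous g t.
Hypothesis g_ge0 : forall t, 0 <= g t.
Hypothesis g_mass_le1 : forall t, 0 <= t -> RInt g 0 t <= 1.
Hypothesis I_C1 : C1_on_nonneg I dI.
Hypothesis I_ode : forall t, 0 <= t -> dI t = beta * (M - I t) * (I t - conv g I t).

Lemma conv_extend_left (t : R) : 0 <= t -> conv g I t = conv g (extend_left I) t.
Proof. move=> Ht; apply: conv_ext => // s Hs; rewrite extend_left_nonneg //; lra. Qed.

Lemma ode_extend_left (t : R) : 0 <= t ->
  dI t = beta * (M - I t) * (I t - conv g (extend_left I) t).
Proof. by move=> Ht; rewrite I_ode // conv_extend_left. Qed.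

Lemma abs_conv_sol_le (t m : R) : 0 <= t ->
  (forall s, 0 <= s <= t -> Rabs (I s) <= m) -> Rabs (conv g (extend_left I) t) <= m.
Proof.
  move=> Ht Hm; apply: abs_conv_le => //; first exact: (extend_left_continuous I_C1).
  move=> s Hs; rewrite extend_left_nonneg; [exact: Hm|lra].
Qed.

Lemma sol_bounded (T : R) : 0 <= T -> exists B, forall s, 0 <= s <= T -> Rabs (I s) <= B.
Proof.
  move=> HT; have [B HB] := bounded_on_segment (extend_left I) T (extend_left_continuous I_C1) HT.
  exists B => s Hs; rewrite -(extend_left_nonneg I s); [exact: HB|lra].
Qed.

Lemma sol_eq0_of_init0 : I 0 = 0 -> forall t, 0 <= t -> I t = 0.
Proof.
  move=> HI0 t Ht; rewrite -(extend_left_nonneg I t) //.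
  apply: (eq0_of_deriv_dominated _ dI) => //.
  - exact: (extend_left_continuous I_C1).
  - exact: (is_derive_extend_left I_C1).
  - by rewrite extend_left_nonneg //; lra.
  move=> T HT; have [B HB] := sol_bounded T ltac:(lra).
  exists (Rabs beta * (Rabs M + B) * 2) => s m Hs Hm.
  have Hm' : forall r, 0 <= r <= s -> Rabs (I r) <= m.
  { by move=> r Hr; rewrite -(extend_left_nonneg I r); [exact: Hm|lra]. }
  have HIs := Hm' s ltac:(lra).
  have HBs := HB s ltac:(lra).
  have HJ := abs_conv_sol_le s m ltac:(lra) Hm'.
  rewrite ode_extend_left; last lra.
  rewrite !Rabs_mult (Rmult_assoc _ 2); apply: Rmult_le_compat.
  - apply: Rmult_le_pos; exact: Rabs_pos.
  - exact: Rabs_pos.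
  - apply: Rmult_le_compat_l; first exact: Rabs_pos.
    have := Rabs_triang_minus M (I s); lra.
  - have := Rabs_triang_minus (I s) (conv g (extend_left I) s); lra.
Qed.

Lemma sol_eqM_of_initM : I 0 = M -> forall t, 0 <= t -> I t = M.
Proof.
  move=> HI0 t Ht; apply: Rminus_diag_uniq; rewrite -(extend_left_nonneg I t) //.
  apply: (eq0_of_deriv_dominated (fun s => extend_left I s - M) dI) => //.
  - move=> s; apply: (continuous_minus (extend_left I) (fun _ => M)).
    + exact: (extend_left_continuous I_C1).
    + exact: continuous_const.
  - move=> s Hs; have := is_derive_minus _ _ s _ _
      (is_derive_extend_left I_C1 s Hs) (is_derive_const M s).
    by rewrite /minus /plus /opp /zero /= Ropp_0 Rplus_0_r.
  - by rewrite extend_left_nonneg ?HI0; [ring|lra].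
  move=> T HT; have [B HB] := sol_bounded T ltac:(lra).
  exists (Rabs beta * (2 * B)) => s m Hs Hm.
  have HMs : Rabs (M - I s) <= m.
  { rewrite Rabs_minus_sym -(extend_left_nonneg I s); [apply: Hm|]; lra. }
  have HBs := HB s ltac:(lra).
  have HJ := abs_conv_sol_le s B ltac:(lra) (fun r Hr => HB r ltac:(lra)).
  rewrite ode_extend_left; last lra.
  have -> : Rabs beta * (2 * B) * m = Rabs beta * (m * (2 * B)) by ring.
  rewrite !Rabs_mult Rmult_assoc; apply: Rmult_le_compat_l; first exact: Rabs_pos.
  apply: Rmult_le_compat => //; try exact: Rabs_pos.
  have := Rabs_triang_minus (I s) (conv g (extend_left I) s); lra.
Qed.

Lemma deriv_eq0_of_stationary_init : I 0 = 0 \/ I 0 = M -> forall t, 0 <= t -> dI t = 0.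
Proof.
  move=> [HI0|HI0] t Ht; rewrite ode_extend_left //.
  - have Hzero := sol_eq0_of_init0 HI0.
    have HJ : Rabs (conv g (extend_left I) t) <= 0.
    { apply: abs_conv_sol_le => // s Hs; rewrite Hzero ?Rabs_R0; lra. }
    have := Rabs_pos (conv g (extend_left I) t) => ?.
    rewrite Hzero // (Rabs_eq_0 (conv g (extend_left I) t)); [ring|lra].
  - by rewrite sol_eqM_of_initM //; ring.
Qed.

Lemma is_derive_weighted_gap (s : R) : 0 < s ->
  is_derive (fun s => (M - extend_left I s) * exp (beta * M * s)) s
    (- dI s * exp (beta * M * s) + (M - extend_left I s) * (beta * M * exp (beta * M * s))).
Proof.
  move=> Hs; have := is_derive_mult _ _ s _ _
    (is_derive_minus _ _ s _ _ (is_derive_const M s) (is_derive_extend_left I_C1 s Hs))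
    (_ : is_derive (fun s => exp (beta * M * s)) s (beta * M * exp (beta * M * s)))
    Rmult_comm => Hderiv.
  rewrite -[- dI s]Rplus_0_l; apply: Hderiv.
  auto_derive; auto; ring.
Qed.

Hypothesis g_pos : forall t, 0 < t -> 0 < g t.
Hypothesis beta_pos : 0 < beta.
Hypothesis I0_interior : 0 < I 0 < M.

Lemma deriv0_pos : 0 < dI 0.
Proof.
  rewrite I_ode; last lra; rewrite /conv RInt_point /zero /= Rminus_0_r.
  case: I0_interior => ? ?; apply: Rmult_lt_0_compat => //; apply: Rmult_lt_0_compat; lra.
Qed.

Section Increasing_prefix.

Variable ts : R.
Hypothesis ts_pos : 0 < ts.
Hypothesis deriv_pos_before : forall s, 0 <= s < ts -> 0 < dI s.

Lemma sol_increasing (x y : R) : 0 <= x < y -> y <= ts -> I x < I y.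
Proof.
  move=> Hxy Hy.
  rewrite -(extend_left_nonneg I x); last lra.
  rewrite -(extend_left_nonneg I y); last lra.
  apply: (increasing_of_is_derive_pos _ dI); first lra.
  - move=> z Hz; apply: (is_derive_extend_left I_C1); lra.
  - move=> z _; exact: (continuity_pt_extend_left I_C1).
  - move=> z Hz; apply: deriv_pos_before; lra.
Qed.

Lemma sol_pos (s : R) : 0 <= s <= ts -> 0 < I s.
Proof.
  move=> Hs; case: (Req_dec s 0) => [->|Hs0]; first by case: I0_interior.
  have := sol_increasing 0 s ltac:(lra) ltac:(lra); case: I0_interior; lra.
Qed.

Lemma conv_lt_sol (s : R) : 0 < s <= ts -> conv g I s < I s.
Proof.
  move=> Hs; rewrite conv_extend_left; last lra.
  rewrite -(extend_left_nonneg I s); last lra.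
  apply: conv_lt => //.
  - exact: (extend_left_continuous I_C1).
  - lra.
  - move=> r Hr; rewrite !extend_left_nonneg; try lra; apply: sol_increasing; lra.
  - rewrite extend_left_nonneg; last lra; have := sol_pos s; lra.
Qed.

Lemma sol_lt_M_before (s : R) : 0 <= s < ts -> I s < M.
Proof.
  move=> Hs; case: (Req_dec s 0) => [->|Hs0]; first by case: I0_interior.
  have := deriv_pos_before s Hs; rewrite I_ode; last lra.
  have := conv_lt_sol s ltac:(lra) => HJ Hprod.
  have Hfactor : 0 < beta * (I s - conv g I s) by apply: Rmult_lt_0_compat; lra.
  case: (Rlt_or_le (I s) M) => // HM; nra.
Qed.

(* [(M - I s) e^{beta M s}] is nondecreasing: by the equation its derivative is
   [beta e^{beta M s} (M - I s) (M - I s + J s)], where the delay term [J] is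
   nonnegative. *)
Lemma sol_lt_M : I ts < M.
Proof.
  set E := fun s => exp (beta * M * s).
  have Hphi : (M - extend_left I 0) * E 0 <= (M - extend_left I ts) * E ts.
  { apply: (nondecreasing_of_is_derive_ge0 (fun s => (M - extend_left I s) * E s)
      (fun s => - dI s * E s + (M - extend_left I s) * (beta * M * E s))); first lra.
    - move=> s Hs; apply: is_derive_weighted_gap; lra.
    - move=> s _; apply/continuity_pt_filterlim.
      apply: (continuous_mult (fun s => M - extend_left I s) E).
      + apply: (continuous_minus (fun _ => M) (extend_left I)); first exact: continuous_const.
        exact: (extend_left_continuous I_C1).
      + apply: ex_derive_continuous; rewrite /E; auto_derive; auto.
    - move=> s Hs /=; rewrite extend_left_nonneg; last lra.
      rewrite ode_extend_left; last lra.
      have HJ : 0 <= conv g (extend_left I) s.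
      { apply: conv_ge0 => //; [exact: (extend_left_continuous I_C1)|lra|move=> r Hr].
        rewrite extend_left_nonneg; last lra.
        have := sol_pos r ltac:(lra); lra. }
      have HIM := sol_lt_M_before s ltac:(lra).
      have HE : 0 < E s by exact: exp_pos.
      have -> : - (beta * (M - I s) * (I s - conv g (extend_left I) s)) * E s
          + (M - I s) * (beta * M * E s)
        = beta * E s * ((M - I s) * (M - I s + conv g (extend_left I) s)) by ring.
      apply: Rmult_le_pos; first nra.
      apply: Rmult_le_pos; lra. }
  move: Hphi; rewrite /E !extend_left_nonneg; try lra.
  rewrite Rmult_0_r exp_0 Rmult_1_r.
  have := exp_pos (beta * M * ts); case: I0_interior; nra.
Qed.

Lemma deriv_pos_at : 0 < dI ts.
Proof.
  rewrite I_ode; last lra.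
  have := sol_lt_M; have := conv_lt_sol ts ltac:(lra) => ? ?.
  apply: Rmult_lt_0_compat; first apply: Rmult_lt_0_compat; lra.
Qed.

End Increasing_prefix.

Lemma deriv_pos_of_init_interior (t : R) : 0 <= t -> 0 < dI t.
Proof.
  move=> Ht; case: (Rlt_or_le 0 (dI t)) => // Hnonpos; exfalso.
  have [ts [Hts [Hts_nonpos Hbefore]]] :=
    first_nonpos_point dI 0 t (deriv_right_continuous I_C1) Ht Hnonpos.
  have Hts0 : 0 < ts.
  { case: (Req_dec ts 0) => [Hts0|]; last lra.
    by rewrite Hts0 in Hts_nonpos; have := deriv0_pos; lra. }
  have := deriv_pos_at ts Hts0 Hbefore; lra.
Qed.

End Solution.

Theorem proposition3p4 (M beta mu sigma I0 : R) (I dI : R -> R)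
  (hM : 0 < M) (hbeta : 0 < beta) (hsigma : 0 < sigma)
  (hI0 : 0 <= I0 <= M)
  (hsol : is_solution beta M mu sigma I0 I dI) :
  (0 < I0 < M -> forall t, 0 <= t -> 0 < dI t) /\
  ((I0 = 0 \/ I0 = M) -> forall t, 0 <= t -> dI t = 0).
Proof.
  case: hsol => [HC1 [<- Hode]].
  have Hcont := lognormal_continuous mu sigma hsigma.
  have Hge0 := lognormal_ge0 mu sigma hsigma.
  have Hmass := RInt_lognormal_le1 mu sigma hsigma.
  split.
  - exact: (deriv_pos_of_init_interior _ _ _ _ _ Hcont Hge0 Hmass HC1 Hode
      (lognormal_pos mu sigma hsigma) hbeta).
  - exact: (deriv_eq0_of_stationary_init _ _ _ _ _ Hcont Hge0 Hmass HC1 Hode).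
Qed.
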